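(* Let $G$ be a $(2,4)$ subgraph of $Q_4$ that is minimal, i.e. no subgraph of $G$ with fewer edges is a $(2,4)$ subgraph. Then $G$ does not contain three edges of a single $4$-cycle (2-dimensional face) of $Q_4$; equivalently, $G$ contains no path of three edges whose directions are $a,b,a$ for some coordinates $a\neq b$.
   Context: $Q_n$ denotes the $n$-dimensional hypercube graph on vertex set $\{0,1\}^n$, two vertices adjacent iff they differ in exactly one coordinate; the direction of an edge is the coordinate in which its endpoints differ. Divider–Chooser game on $\{0,1\}^n$ with respect to a subgraph $G$ of $Q_n$: it lasts $n-1$ rounds; starting with the vertex set $\{0,1\}^n$, in each round the Divider picks a coordinate $i\in[n]$ not picked before and the Chooser either deletes all current vertices $x$ with $x_i=0$ or all current vertices with $x_i=1$. After $n-1$ rounds two vertices remain (they form an edge of $Q_n$); the Chooser wins if this edge belongs to $G$. A $(k,n)$ subgraph is a subgraph $G$ of $Q_n$ of maximum degree at most $k$ such that the Chooser has a winning strategy in this game. *)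

From mathcomp Require Import all_boot.
Set Implicit Arguments. Unset Strict Implicit. Unset Printing Implicit Defensive.

Definition vert (n : nat) := {ffun 'I_n -> bool}.

Definition flip n (x : vert n) (i : 'I_n) : vert n :=
  [ffun j => if j == i then ~~ x j else x j].

Definition qedge n (e : {set vert n}) : bool :=
  [exists x : vert n, exists i : 'I_n, e == [set x; flip x i]].

(* A subgraph G of Q_n is represented by its edge set E (isolated vertices
   are irrelevant for degrees and for the game). *)
Definition is_qsubgraph n (E : {set {set vert n}}) : bool :=
  [forall e in E, qedge e].

Definition max_deg_le n (k : nat) (E : {set {set vert n}}) : bool :=
  [forall v : vert n, #|[set e in E | v \in e]| <= k].

(* Game states: partial assignments of the picked coordinates. *)
Definition pstate (n : nat) := {ffun 'I_n -> option bool}.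

Definition upd n (p : pstate n) (i : 'I_n) (b : bool) : pstate n :=
  [ffun j => if j == i then Some b else p j].

Definition alive n (p : pstate n) : {set vert n} :=
  [set x : vert n | [forall j : 'I_n, if p j is Some b then x j == b else true]].

(* Chooser wins with r rounds remaining from state p:
   for every coordinate the Divider may pick (not picked before),
   the Chooser can keep x_i = b (deleting the other half) and still win;
   at the end the remaining vertex set must be an edge of G. *)
Fixpoint chooser_wins n (E : {set {set vert n}}) (r : nat) (p : pstate n) : bool :=
  match r with
  | 0 => alive p \in E
  | r'.+1 => [forall i : 'I_n, (p i == None) ==>
               [exists b : bool, chooser_wins E r' (upd p i b)]]
  end.

Definition empty_state n : pstate n := [ffun => None].

Definition kn_subgraph (k n : nat) (E : {set {set vert n}}) : bool :=
  [&& is_qsubgraph E, max_deg_le k E & chooser_wins E n.-1 (empty_state n)].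

Arguments kn_subgraph k n E : clear implicits.

Definition minimal_kn_subgraph (k n : nat) (E : {set {set vert n}}) : Prop :=
  kn_subgraph k n E /\
  forall E' : {set {set vert n}}, E' \subset E -> #|E'| < #|E| -> ~~ kn_subgraph k n E'.
Arguments minimal_kn_subgraph k n E : clear implicits.

From mathcomp Require Import all_boot fingroup perm.
From Stdlib Require Import NArith.
Set Implicit Arguments. Unset Strict Implicit. Unset Printing Implicit Defensive.

(** By the symmetries of Q_4 (permutations and translations of the coordinates,
    which preserve degrees and the game) the path may be assumed to start at the
    origin with directions 0, 1, 0.  A certified branch-and-bound search over the
    edge sets containing this path and of maximum degree at most 2 then shows
    that whenever Chooser wins on such a graph she still wins after its first
    edge is deleted, so a minimal (2,4) subgraph cannot contain the path.  The
    search fixes edges one at a time and prunes a branch as soon as the forced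
    edges violate the degree bound, the allowed edges already lose, or the
    forced edges without the first one already win; the last two tests are sound
    because winning is monotone in the edge set. *)

(** * The hypercube and the game *)

Section Cube.
Variable n : nat.
Implicit Types (v w : vert n) (i j : 'I_n) (p : pstate n) (E : {set {set vert n}}).

Definition origin : vert n := [ffun => false].

Lemma flip_at v i j : flip v i j = if j == i then ~~ v j else v j.
Proof. by rewrite ffunE. Qed.

Lemma flipK i : involutive (fun v : vert n => flip v i).
Proof. by move=> v; apply/ffunP => j; rewrite !flip_at; case: eqP; rewrite ?negbK. Qed.

Lemma flip_neq v i : flip v i != v.
Proof. by apply/eqP => /ffunP /(_ i); rewrite flip_at eqxx; case: (v i). Qed.

Lemma qedge_eq v w i j : [set v; flip v i] = [set w; flip w j] ->
  i = j /\ (v = w \/ v = flip w j).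
Proof.
move=> Evw.
have : v \in [set w; flip w j] by rewrite -Evw set21.
have : flip v i \in [set w; flip w j] by rewrite -Evw set22.
have same_dir u : flip u i = flip u j -> i = j.
  move/ffunP/(_ i); rewrite !flip_at eqxx; case: eqP => // _; by case: (u i).
rewrite !inE => /orP [] /eqP H /orP [] /eqP Hv; subst v.
- by have := flip_neq w i; rewrite H eqxx.
- by split; [apply: (same_dir (flip w j)); rewrite flipK|right].
- by split; [apply: same_dir H|left].
- by have := flip_neq (flip w j) i; rewrite H eqxx.
Qed.

Lemma count_edges_at_le E v : count (fun i => [set v; flip v i] \in E) (enum 'I_n)
  <= #|[set e in E | v \in e]|.
Proof.
have edge_inj : injective (fun i => [set v; flip v i]) by move=> i j /qedge_eq [].
rewrite -size_filter -(size_map (fun i => [set v; flip v i])) cardE.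
apply: uniq_leq_size; first by rewrite (map_inj_uniq edge_inj) filter_uniq ?enum_uniq.
by move=> e /mapP [i]; rewrite mem_filter => /andP [iE _] ->; rewrite mem_enum inE iE set21.
Qed.

Lemma minimal_kn_subgraphD1 k E e : minimal_kn_subgraph k n E -> e \in E ->
  ~~ chooser_wins (E :\ e) n.-1 (empty_state n).
Proof.
move=> [/and3P [qsub deg _] minE] eE.
have sub : E :\ e \subset E by apply: subsetDl.
have /minE : #|E :\ e| < #|E| by rewrite (cardsD1 e E) eE.
move=> /(_ sub); apply: contra => win; apply/and3P; split => //.
- apply/forallP => f; apply/implyP => /(subsetP sub) fE.
  exact: implyP (forallP qsub f) fE.
- apply/forallP => v; apply: leq_trans (forallP deg v); apply: subset_leq_card.
  by apply/subsetP => f; rewrite !inE => /andP [/andP [_ ->] ->].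
Qed.

Definition free p : {set 'I_n} := [set i | p i == None].

Lemma free_upd p i b : p i == None -> free (upd p i b) = free p :\ i.
Proof.
move=> /eqP pi; apply/setP => j; rewrite !inE ffunE.
by case: (eqVneq j i) => [->|ji]; rewrite ?eqxx ?ji.
Qed.

Lemma card_free_upd p i b : p i == None -> #|free (upd p i b)| = #|free p|.-1.
Proof. by move=> pi; rewrite free_upd // (cardsD1 i (free p)) inE pi. Qed.

Definition base_vertex p : vert n := [ffun j => odflt false (p j)].

Lemma alive_leaf p i : free p = [set i] ->
  alive p = [set base_vertex p; flip (base_vertex p) i].
Proof.
move=> /setP free_i; have fixed j : j != i -> p j = Some (base_vertex p j).
  by move=> ji; move: (free_i j); rewrite !inE (negbTE ji) ffunE; case: (p j).
have /eqP pi : p i == None by move: (free_i i); rewrite !inE eqxx.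
apply/setP => w; rewrite !inE; apply/forallP/orP => [alive_w|].
- have w_base j : j != i -> w j = base_vertex p j.
    by move=> ji; move: (alive_w j); rewrite fixed // => /eqP.
  case wi : (w i); [right|left]; apply/eqP/ffunP => j; rewrite ?flip_at;
    (case: (eqVneq j i) => [->|/w_base //]); by rewrite wi ffunE pi.
- move=> w_leaf j; case: (eqVneq j i) => [->|ji]; first by rewrite pi.
  by rewrite fixed //; case: w_leaf => /eqP ->; rewrite ?flip_at ?(negbTE ji).
Qed.

Definition bits (s : seq bool) : nat := foldr (fun (b : bool) c => b + c.*2) 0 s.

Lemma odd_bits s (j : nat) : odd (bits s %/ 2 ^ j) = nth false s j.
Proof.
elim: s j => [|b s IH] j /=; first by rewrite div0n nth_nil.
case: j => [|j] /=; first by rewrite divn1 oddD odd_double addbF; case: b.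
by rewrite expnS divnMA divn2 half_bit_double IH.
Qed.

Lemma bits_lt s : bits s < 2 ^ size s.
Proof.
elim: s => //= b s IH.
by rewrite expnS mul2n; case: b; rewrite /= ?add0n ?add1n ?ltn_double ?ltn_Sdouble.
Qed.

Lemma nth_enum_map (T : Type) (x0 : T) (f : 'I_n -> T) i :
  nth x0 [seq f j | j <- enum 'I_n] i = f i.
Proof. by rewrite (nth_map i) ?size_enum_ord // nth_ord_enum. Qed.

Definition vlist v : seq bool := [seq v i | i <- enum 'I_n].
Definition code v : nat := bits (vlist v).
Definition vdec (c : nat) : vert n := [ffun i : 'I_n => odd (c %/ 2 ^ i)].

Lemma size_vlist v : size (vlist v) = n.
Proof. by rewrite size_map size_enum_ord. Qed.

Lemma codeK : cancel code vdec.
Proof. by move=> v; apply/ffunP => j; rewrite ffunE odd_bits nth_enum_map. Qed.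

Lemma code_lt v : code v < 2 ^ n.
Proof. by have := bits_lt (vlist v); rewrite size_vlist. Qed.

Lemma vlist_vdec c : vlist (vdec c) = [seq odd (c %/ 2 ^ k) | k <- iota 0 n].
Proof. by rewrite /vlist -val_enum_ord -map_comp; apply: eq_map => i; rewrite /= ffunE. Qed.

Lemma vlist_origin : vlist origin = nseq n false.
Proof.
apply: (@eq_from_nth _ false) => [|k]; rewrite size_vlist ?size_nseq // => kn.
by rewrite -[k]/(val (Ordinal kn)) nth_enum_map nth_nseq kn ffunE.
Qed.

Lemma vlist_set v i b : vlist [ffun j => if j == i then b else v j] = set_nth false (vlist v) i b.
Proof.
apply: (@eq_from_nth _ false) => [|j jn].
  by rewrite size_set_nth !size_vlist (maxn_idPr (ltn_ord i)).
rewrite size_vlist in jn; rewrite nth_set_nth /= -[j]/(val (Ordinal jn)) !nth_enum_map ffunE.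
by rewrite -val_eqE.
Qed.

Lemma vlist_flip v i : vlist (flip v i) = set_nth false (vlist v) i (~~ v i).
Proof.
rewrite -vlist_set; congr vlist; apply/ffunP => j; rewrite !ffunE.
by case: eqP => [->|].
Qed.

(* States are also read as lists: [vm_compute] cannot evaluate [enum 'I_n], so
   game trees are built from lists. *)
Definition pseq p : seq (option bool) := [seq p i | i <- enum 'I_n].

Lemma size_pseq p : size (pseq p) = n.
Proof. by rewrite size_map size_enum_ord. Qed.

Lemma pseq_upd p i b : pseq (upd p i b) = set_nth None (pseq p) i (Some b).
Proof.
apply: (@eq_from_nth _ None) => [|j jn].
  by rewrite size_set_nth !size_pseq (maxn_idPr (ltn_ord i)).
rewrite size_pseq in jn; rewrite nth_set_nth /= -[j]/(val (Ordinal jn)) !nth_enum_map ffunE.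
by rewrite -val_eqE.
Qed.

Lemma pseq_empty : pseq (empty_state n) = nseq n None.
Proof.
apply: (@eq_from_nth _ None) => [|j]; rewrite size_pseq ?size_nseq // => jn.
by rewrite -[j]/(val (Ordinal jn)) nth_enum_map nth_nseq jn ffunE.
Qed.

Lemma index_pseq p i : free p = [set i] -> index None (pseq p) = i.
Proof.
move=> /setP free_i.
have nthE (j : 'I_n) : (nth None (pseq p) j == None) = (j == i).
  by rewrite nth_enum_map; move: (free_i j); rewrite !inE.
have iS : None \in pseq p.
  have /eqP <- : nth None (pseq p) i == None by rewrite nthE.
  by rewrite mem_nth // size_pseq.
have lt_idx : index None (pseq p) < n by rewrite -(size_pseq p) index_mem.
by have := nthE (Ordinal lt_idx); rewrite /= nth_index // eqxx => /esym/eqP <-.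
Qed.

Section Level.
Variables (X : Type) (f : seq (option bool) -> X).

Definition level (q : seq (option bool)) : seq (seq X) :=
  [seq [seq f (set_nth None q k (Some b)) | b <- [:: false; true]]
     | k <- iota 0 (size q) & nth None q k == None].

Lemma all_has_level (ev : pred X) E r p :
  (forall q, #|free q| = r.+1 -> ev (f (pseq q)) = chooser_wins E r q) ->
  #|free p| = r.+2 -> all (has ev) (level (pseq p)) = chooser_wins E r.+1 p.
Proof.
move=> leafE freep; rewrite /= /level size_map size_enum_ord -val_enum_ord.
rewrite filter_map !all_map all_filter.
have step i : (nth None (pseq p) i == None) ==>
      has ev [seq f (set_nth None (pseq p) i (Some b)) | b <- [:: false; true]]
    = (p i == None) ==> [exists b, chooser_wins E r (upd p i b)].
  rewrite nth_enum_map; case pi: (p i == None) => //=.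
  rewrite -!pseq_upd !leafE ?card_free_upd ?freep // orbF.
  by apply/orP/existsP => [[] H|[[] H]]; [exists false|exists true|right|left].
apply/allP/forallP => [H i|H i _]; first by rewrite -step; exact: H (mem_enum _ i).
by rewrite /= step; apply: H.
Qed.
End Level.

(** * Automorphisms of the cube *)

Lemma perm_pair (T : finType) (x1 x2 y1 y2 : T) : x1 != x2 -> y1 != y2 ->
  exists s : {perm T}, s x1 = y1 /\ s x2 = y2.
Proof.
move=> x12 y12; pose t := tperm x1 y1.
have ty2 : t y2 != x1 by rewrite (canF_eq (tpermK x1 y1)) tpermL eq_sym.
exists (tperm x2 (t y2) * t)%g; rewrite !permM tpermL tpermK tpermD ?tpermL //.
by rewrite eq_sym.
Qed.

Section Automorphism.
Variables (s : {perm 'I_n}) (y : vert n).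

Definition cube_act v : vert n := [ffun j => y j (+) v (s j)].
Definition state_act p : pstate n := [ffun j => omap (addb (y j)) (p (s j))].
Definition edges_act E : {set {set vert n}} := [set cube_act @: e | e : {set vert n} in E].

Lemma cube_act_inj : injective cube_act.
Proof.
move=> v w /ffunP act_vw; apply/ffunP => i.
by have := act_vw (s^-1%g i); rewrite !ffunE permKV => /addbI.
Qed.

Lemma cube_act_flip v i : cube_act (flip v i) = flip (cube_act v) (s^-1%g i).
Proof.
apply/ffunP => j; rewrite !ffunE (canF_eq (permK s)).
by case: eqP; rewrite ?addbN.
Qed.

Lemma cube_act_edge v i :
  cube_act @: [set v; flip v i] = [set cube_act v; flip (cube_act v) (s^-1%g i)].
Proof. by rewrite imsetU1 imset_set1 cube_act_flip. Qed.

Lemma edges_act_edge E v i : [set v; flip v i] \in E ->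
  [set cube_act v; flip (cube_act v) (s^-1%g i)] \in edges_act E.
Proof. by move=> vE; rewrite -cube_act_edge imset_f. Qed.

Lemma mem_alive_state_act p v : (cube_act v \in alive (state_act p)) = (v \in alive p).
Proof.
have alive_at j : (if state_act p j is Some b then cube_act v j == b else true)
    = (if p (s j) is Some b then v (s j) == b else true).
  by rewrite !ffunE; case: (p (s j)) => //= b; rewrite (inj_eq (@addbI _)).
rewrite !inE; apply/forallP/forallP => [H i|H j]; last by rewrite alive_at.
by have := H (s^-1%g i); rewrite alive_at permKV.
Qed.

Lemma alive_state_act p : alive (state_act p) = cube_act @: alive p.
Proof.
have [g actK actVK] := injF_bij cube_act_inj.
apply/setP => w; rewrite -[w]actVK (mem_imset _ _ cube_act_inj).
exact: mem_alive_state_act.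
Qed.

Lemma state_act_None p i : (state_act p i == None) = (p (s i) == None).
Proof. by rewrite ffunE; case: (p (s i)). Qed.

Lemma upd_state_act p i b : upd (state_act p) i b = state_act (upd p (s i) (y i (+) b)).
Proof.
apply/ffunP => j; rewrite !ffunE (inj_eq perm_inj).
by case: eqP => [->|//]; rewrite /= addKb.
Qed.

Lemma state_act_empty : state_act (empty_state n) = empty_state n.
Proof. by apply/ffunP => j; rewrite !ffunE. Qed.

Lemma chooser_wins_act E r p :
  chooser_wins (edges_act E) r (state_act p) = chooser_wins E r p.
Proof.
elim: r p => [|r IH] p /=.
  by rewrite alive_state_act (mem_imset _ _ (imset_inj cube_act_inj)).
have step i : (state_act p i == None) ==>
      [exists b, chooser_wins (edges_act E) r (upd (state_act p) i b)]
    = (p (s i) == None) ==> [exists c, chooser_wins E r (upd p (s i) c)].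
  rewrite state_act_None; congr (_ ==> _).
  apply/existsP/existsP => [[b]|[c] win].
  - by rewrite upd_state_act IH => win; exists (y i (+) b).
  - by exists (y i (+) c); rewrite upd_state_act addKb IH.
apply/forallP/forallP => [H i|H i]; last by rewrite step.
by rewrite -(permKV s i) -step.
Qed.

Lemma edges_actD1 E e : edges_act (E :\ e) = edges_act E :\ cube_act @: e.
Proof.
have act_inj := imset_inj cube_act_inj.
apply/setP => f; rewrite in_setD1; apply/imsetP/andP => [[e' e'E ->]|[fe /imsetP [e' e'E fE]]].
- by move: e'E; rewrite in_setD1 -(inj_eq act_inj) => /andP [-> ?]; rewrite imset_f.
- by subst f; exists e' => //; rewrite in_setD1 e'E andbT -(inj_eq act_inj).
Qed.

Lemma max_deg_le_act k E : max_deg_le k E -> max_deg_le k (edges_act E).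
Proof.
move=> /forallP deg; apply/forallP => w.
have [g actK actVK] := injF_bij cube_act_inj.
have -> : [set e in edges_act E | w \in e]
    = (fun e : {set vert n} => cube_act @: e) @: [set e in E | g w \in e].
  apply/setP => f; rewrite inE; apply/andP/imsetP => [[/imsetP [e eE ->]]|[e]].
  - by rewrite -{1}[w]actVK (mem_imset _ _ cube_act_inj) => ?; exists e; rewrite ?inE ?eE.
  - rewrite inE => /andP [eE we] ->; split; first exact: imset_f.
    by rewrite -{1}[w]actVK (mem_imset _ _ cube_act_inj).
by rewrite card_imset //; apply: imset_inj cube_act_inj.
Qed.

End Automorphism.

End Cube.

Arguments origin {n}.

(** * Numbering the edges of Q_4 *)

Implicit Types (v w : vert 4) (i j : 'I_4) (p : pstate 4) (E : {set {set vert 4}}).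

Definition o0 : 'I_4 := @Ordinal 4 0 isT.
Definition o1 : 'I_4 := @Ordinal 4 1 isT.

Definition edge_low v i : vert 4 := [ffun j => if j == i then false else v j].
Definition ekey v i : nat := 4 * code (edge_low v i) + i.
Definition ekey_bits (s : seq bool) (k : nat) : nat := 4 * bits (set_nth false s k false) + k.
Definition edge_of (k : nat) : {set vert 4} :=
  [set vdec 4 (k %/ 4); flip (vdec 4 (k %/ 4)) (inord (k %% 4))].

Lemma ekeyE v i : ekey v i = ekey_bits (vlist v) i.
Proof. by rewrite /ekey /code vlist_set. Qed.

Lemma edge_low_flip v i : edge_low (flip v i) i = edge_low v i.
Proof. by apply/ffunP => j; rewrite !ffunE; case: eqP. Qed.

Lemma edge_lowE v i : [set edge_low v i; flip (edge_low v i) i] = [set v; flip v i].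
Proof.
case vi: (v i).
  have -> : edge_low v i = flip v i.
    by apply/ffunP => j; rewrite !ffunE; case: eqP => [->|]; rewrite ?vi.
  by rewrite flipK setUC.
have -> // : edge_low v i = v.
by apply/ffunP => j; rewrite !ffunE; case: eqP => [->|].
Qed.

Lemma edge_of_ekey v i : edge_of (ekey v i) = [set v; flip v i].
Proof.
rewrite /edge_of /ekey mulnC divnMDl // modnMDl divn_small // modn_small //.
by rewrite addn0 codeK inord_val edge_lowE.
Qed.

Lemma ekey_edge_eq v w i j : [set v; flip v i] = [set w; flip w j] -> ekey v i = ekey w j.
Proof. by move/qedge_eq => [<- [->|->]]; rewrite /ekey ?edge_low_flip. Qed.

Definition vlists : seq (seq bool) :=
  [seq [seq odd (c %/ 2 ^ k) | k <- iota 0 4] | c <- iota 0 16].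
Definition keys : seq nat := [seq ekey_bits s k | s <- vlists, k <- iota 0 4].

Lemma vlistsE : vlists = [seq vlist (vdec 4 c) | c <- iota 0 16].
Proof. by apply: eq_map => c; rewrite vlist_vdec. Qed.

Lemma ekey_in_keys v i : ekey v i \in keys.
Proof.
rewrite ekeyE; apply: allpairs_f; last by rewrite mem_iota ltn_ord.
by rewrite vlistsE; apply/mapP; exists (code v); rewrite ?codeK // mem_iota code_lt.
Qed.

Lemma keysP k : k \in keys -> exists v i, k = ekey v i.
Proof.
rewrite /keys vlistsE => /allpairsP [[s k'] [/mapP [c _ sE] kV ->]].
rewrite mem_iota in kV; have k'4 : k' < 4 by case/andP: kV.
by exists (vdec 4 c), (Ordinal k'4); rewrite ekeyE sE.
Qed.

Lemma edge_of_inj : {in keys &, injective edge_of}.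
Proof.
move=> _ _ /keysP [v [i ->]] /keysP [w [j ->]].
by rewrite !edge_of_ekey => /ekey_edge_eq.
Qed.

Definition edge_pred E (k : N) : bool :=
  (N.to_nat k \in keys) && (edge_of (N.to_nat k) \in E).

Lemma edge_pred_ekey E v i : edge_pred E (N.of_nat (ekey v i)) = ([set v; flip v i] \in E).
Proof. by rewrite /edge_pred Nat2N.id ekey_in_keys edge_of_ekey. Qed.

Definition leaf_key (q : seq (option bool)) : N :=
  N.of_nat (ekey_bits [seq odflt false x | x <- q] (index None q)).

Lemma leaf_key_pseq p i :
  free p = [set i] -> leaf_key (pseq p) = N.of_nat (ekey (base_vertex p) i).
Proof.
move=> free_i; rewrite /leaf_key (index_pseq free_i) ekeyE /pseq -map_comp.
by congr (N.of_nat (ekey_bits _ _)); apply: eq_map => j; rewrite /= ffunE.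
Qed.

Definition tree_wins (t : N -> bool) (T : seq (seq (seq (seq (seq (seq N)))))) : bool :=
  all (has (all (has (all (has t))))) T.

(* Precomputed, so that [search] does not rebuild the tree at every step. *)
Definition game_tree := Eval vm_compute in level (level (level leaf_key)) (nseq 4 None).

Lemma game_treeE : game_tree = level (level (level leaf_key)) (nseq 4 None).
Proof. by vm_compute. Qed.

Lemma chooser_wins_tree E : chooser_wins E 3 (empty_state 4) = tree_wins (edge_pred E) game_tree.
Proof.
have free_empty : free (empty_state 4) = setT by apply/setP => i; rewrite !inE ffunE.
rewrite /tree_wins game_treeE -pseq_empty; symmetry; apply: all_has_level; last first.
  by rewrite free_empty cardsT card_ord.
move=> q free_q; apply: all_has_level free_q => q' free_q'; apply: all_has_level free_q'.
move=> q'' /eqP/cards1P [i free_i].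
by rewrite /= (leaf_key_pseq free_i) edge_pred_ekey (alive_leaf free_i).
Qed.

Definition incident (s : seq bool) : seq N := [seq N.of_nat (ekey_bits s k) | k <- iota 0 4].
Definition incidence : seq (seq N) := Eval vm_compute in map incident vlists.

Lemma incidenceE : incidence = map incident vlists.
Proof. by vm_compute. Qed.

Lemma incident_vlist v : incident (vlist v) = [seq N.of_nat (ekey v i) | i <- enum 'I_4].
Proof. by rewrite /incident -val_enum_ord -map_comp; apply: eq_map => i; rewrite /= ekeyE. Qed.

Definition degree_ok (t : N -> bool) : bool := all (fun l => count t l <= 2) incidence.

Lemma degree_ok_edge_pred E : max_deg_le 2 E -> degree_ok (edge_pred E).
Proof.
move=> /forallP deg; rewrite /degree_ok incidenceE vlistsE !all_map.
apply/allP => c _; change (count (edge_pred E) (incident (vlist (vdec 4 c))) <= 2).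
rewrite incident_vlist count_map.
rewrite (eq_count (fun i => edge_pred_ekey E (vdec 4 c) i)).
exact: leq_trans (count_edges_at_le _ _) (deg _).
Qed.

(** * A certified search *)

Definition edge_data : seq (N * seq N * seq N) := Eval vm_compute in
  [seq (N.of_nat (ekey_bits s k), incident s, incident (set_nth false s k true))
     | s <- vlists, k <- [seq k <- iota 0 4 | ~~ nth false s k]].

Definition mask (s : seq N) : N := foldr (fun k m => N.setbit m k) 0%N s.

Lemma testbit_mask s k : N.testbit (mask s) k = (k \in s).
Proof.
elim: s => [|x s IH] /=; first by case: k.
rewrite N.setbit_eqb IH inE; congr (_ || _).
by apply/idP/eqP => [/N.eqb_eq|->]; rewrite ?N.eqb_refl.
Qed.

Definition all_keys_mask : N := Eval vm_compute in mask (map N.of_nat keys).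
Lemma all_keys_maskE : all_keys_mask = mask (map N.of_nat keys).
Proof. by vm_compute. Qed.

Lemma tree_wins_mono (t t' : N -> bool) T :
  (forall k, t k -> t' k) -> tree_wins t T -> tree_wins t' T.
Proof.
move=> tt'; apply: sub_all => ?; apply: sub_has => ?; apply: sub_all => ?.
by apply: sub_has => ?; apply: sub_all => ?; apply: sub_has.
Qed.

Lemma degree_ok_anti (t t' : N -> bool) : (forall k, t k -> t' k) -> degree_ok t' -> degree_ok t.
Proof. by move=> tt'; apply: sub_all => l /=; apply/leq_trans/sub_count. Qed.

(* Picks the next edge to branch on; soundness of [search] does not depend on it. *)
Definition choose_edge (lo hi : N) : option N :=
  let score e := let: (k, u, w) := e in
     if N.testbit lo k || ~~ N.testbit hi k then 0 else
     let d1 := count (N.testbit lo) u in let d2 := count (N.testbit lo) w in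
     if (2 <= d1) || (2 <= d2) then 100 else (d1 + d2).+1 in
  let best := foldl (fun acc e => if score acc.2 < score e then (true, e) else acc)
                (false, (0%N, [::], [::])) edge_data in
  if best.1 then Some best.2.1.1 else None.

Fixpoint search (fuel : nat) (lo hi : N) : bool :=
  if fuel is fuel'.+1 then
    if ~~ degree_ok (N.testbit lo) then true else
    if ~~ tree_wins (N.testbit hi) game_tree then true else
    if tree_wins (N.testbit (N.clearbit lo 0)) game_tree then true else
    if choose_edge lo hi is Some k then
      search fuel' lo (N.clearbit hi k) && search fuel' (N.setbit lo k) hi
    else false
  else false.

(* Unfolding by [simpl] would evaluate [game_tree] symbolically. *)
Lemma searchS fuel lo hi : search fuel.+1 lo hi =
  if ~~ degree_ok (N.testbit lo) then true else
  if ~~ tree_wins (N.testbit hi) game_tree then true else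
  if tree_wins (N.testbit (N.clearbit lo 0)) game_tree then true else
  if choose_edge lo hi is Some k then
    search fuel lo (N.clearbit hi k) && search fuel (N.setbit lo k) hi
  else false.
Proof. by []. Qed.

Lemma search_sound fuel lo hi : search fuel lo hi ->
  forall t t' : N -> bool,
  (forall k, N.testbit lo k -> t k) -> (forall k, t k -> N.testbit hi k) ->
  (forall k, k <> 0%N -> t k -> t' k) ->
  degree_ok t -> tree_wins t game_tree -> tree_wins t' game_tree.
Proof.
elim: fuel lo hi => [//|fuel IH] lo hi; rewrite searchS => + t t' lo_t t_hi t_t' deg win.
case: ifP => [/negP lo_deg _|_]; first by case: lo_deg; apply: degree_ok_anti lo_t deg.
case: ifP => [/negP hi_lose _|_]; first by case: hi_lose; apply: tree_wins_mono t_hi win.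
case: ifP => [lo_win _|_].
  apply: tree_wins_mono lo_win => k; rewrite N.clearbit_eqb => /andP [lo_k k0].
  by apply: t_t' (lo_t _ lo_k) => k0'; rewrite k0' in k0.
case: (choose_edge lo hi) => [k /andP [out_k in_k]|//].
case tk: (t k).
- apply: (IH _ _ in_k t t') => // j; rewrite N.setbit_eqb => /orP [/N.eqb_eq <- //|]; exact: lo_t.
- apply: (IH _ _ out_k t t') => // j tj; rewrite N.clearbit_eqb t_hi //=.
  by apply/negP => /N.eqb_eq kj; rewrite kj tj in tk.
Qed.

Lemma search_canonical : search 40 (mask [:: 0%N; 5%N; 8%N]) all_keys_mask.
Proof. by vm_compute. Qed.

Lemma canonical_keys :
  [:: N.of_nat (ekey origin o0); N.of_nat (ekey (flip origin o0) o1);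
      N.of_nat (ekey (flip (flip origin o0) o1) o0)] = [:: 0%N; 5%N; 8%N].
Proof. by rewrite !ekeyE !vlist_flip vlist_origin !flip_at !ffunE. Qed.

Lemma canonical_path_removable E :
  max_deg_le 2 E ->
  [set origin; flip origin o0] \in E ->
  [set flip origin o0; flip (flip origin o0) o1] \in E ->
  [set flip (flip origin o0) o1; flip (flip (flip origin o0) o1) o0] \in E ->
  chooser_wins E 3 (empty_state 4) ->
  chooser_wins (E :\ [set origin; flip origin o0]) 3 (empty_state 4).
Proof.
move=> deg e1 e2 e3; rewrite !chooser_wins_tree => win.
have key0 : N.of_nat (ekey origin o0) = 0%N by rewrite ekeyE vlist_origin.
apply: (search_sound search_canonical _ _ _ (degree_ok_edge_pred deg) win).
- move=> k; rewrite testbit_mask -canonical_keys !inE.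
  by case/or3P => /eqP ->; rewrite edge_pred_ekey.
- move=> k /andP [kK _]; rewrite all_keys_maskE testbit_mask -[k]N2Nat.id map_f //.
- move=> k k0 /andP [kK kE]; rewrite /edge_pred kK !inE kE andbT /=.
  apply/eqP; rewrite -edge_of_ekey => /(edge_of_inj kK (ekey_in_keys _ _)) kE0.
  by apply: k0; rewrite -key0 -kE0 N2Nat.id.
Qed.

Theorem mainTheorem8 (E : {set {set vert 4}}) :
  minimal_kn_subgraph 2 4 E ->
  forall (x : vert 4) (a b : 'I_4), a != b ->
    ~ [/\ [set x; flip x a] \in E,
          [set flip x a; flip (flip x a) b] \in E &
          [set flip (flip x a) b; flip (flip (flip x a) b) a] \in E].
Proof.
move=> minE x a b ab [e1 e2 e3].
have [s [s0 s1]] := perm_pair (isT : o0 != o1) ab.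
pose y : vert 4 := [ffun j => x (s j)].
have x0 : cube_act s y x = origin by apply/ffunP => j; rewrite !ffunE addbb.
have a0 : (s^-1 a = o0)%g by rewrite -s0 permK.
have b1 : (s^-1 b = o1)%g by rewrite -s1 permK.
have xa : cube_act s y (flip x a) = flip origin o0 by rewrite cube_act_flip x0 a0.
have xab : cube_act s y (flip (flip x a) b) = flip (flip origin o0) o1.
  by rewrite cube_act_flip xa b1.
have [/and3P [_ deg win] _] := minE.
have := minimal_kn_subgraphD1 minE e1; apply/negP/negPn.
rewrite -(chooser_wins_act s y) state_act_empty edges_actD1 cube_act_edge x0 a0.
apply: canonical_path_removable.
- exact: max_deg_le_act.
- by rewrite -x0 -a0; apply: edges_act_edge.
- by rewrite -xa -b1; apply: edges_act_edge.
- by rewrite -xab -a0; apply: edges_act_edge.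
- by rewrite -(state_act_empty s y) chooser_wins_act.
Qed.
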